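(* The ranges of $\mathcal{A}_1$ and $\mathcal{A}_2$ coincide: $\{\mathcal{A}_1(\nu):\nu\in\mathfrak{M}_L^1(\mathbb{R}^d)\}=\{\mathcal{A}_2(\nu):\nu\in\mathfrak{M}_L^2(\mathbb{R}^d)\}$.
   Context: A Lévy measure on $\mathbb{R}^d$ is a measure $\nu$ with $\nu(\{0\})=0$ and $\int(1\wedge|x|^2)\nu(\mathrm{d}x)<\infty$; their class is $\mathfrak{M}_L^2(\mathbb{R}^d)$, and $\mathfrak{M}_L^1(\mathbb{R}^d)$ is the class of Lévy measures with $\int(1\wedge|x|)\nu(\mathrm{d}x)<\infty$. For $s>0$ set $a_1(r;s)=2\pi^{-1}(s-r^2)^{-1/2}$ for $0<r<s^{1/2}$ and $0$ otherwise; $a_2(r;s)=2\pi^{-1}(s^2-r^2)^{-1/2}$ for $0<r<s$ and $0$ otherwise. For $k=1,2$, $\mathcal{A}_k(\nu)(B)=\int_{\mathbb{R}^d\setminus\{0\}}\nu(\mathrm{d}x)\int_0^\infty a_k(r;|x|)1_B(rx/|x|)\,\mathrm{d}r$, $B$ Borel; its domain (measures mapped to Lévy measures) is $\mathfrak{M}_L^k(\mathbb{R}^d)$. *)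

From HB Require Import structures.
From mathcomp Require Import all_boot all_order all_algebra.
From mathcomp Require Import all_classical all_reals all_analysis.
Set Implicit Arguments. Unset Strict Implicit. Unset Printing Implicit Defensive.
Import Order.TTheory GRing.Theory Num.Theory.
Import numFieldNormedType.Exports.
Local Open Scope classical_set_scope.
Local Open Scope ring_scope.

(* R^d as row vectors 'rV[R]_d, equipped with its Borel sigma-algebra
   (generated by the open sets of the usual product topology). *)
Notation Rd R d := (g_sigma_algebraType (@open 'rV[R]_d)).

Definition toV {R : realType} {d : nat} (x : Rd R d) : 'rV[R]_d := x.

(* Euclidean norm |x| on R^d (the library norm on matrices is the max norm). *)
Definition enorm {R : realType} {d : nat} (x : 'rV[R]_d) : R :=
  Num.sqrt (\sum_(i < d) x ord0 i ^+ 2).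

Definition a1 {R : realType} (r s : R) : R :=
  if (0 < r) && (r < Num.sqrt s) then 2 / pi * (Num.sqrt (s - r ^+ 2))^-1 else 0.
Definition a2 {R : realType} (r s : R) : R :=
  if (0 < r) && (r < s) then 2 / pi * (Num.sqrt (s ^+ 2 - r ^+ 2))^-1 else 0.

Definition akern {R : realType} (k : nat) : R -> R -> R :=
  if k == 1%N then a1 else a2.

Definition Aintegrand {R : realType} {d : nat} (k : nat) (B : set (Rd R d))
    (x : Rd R d) (r : R) : R :=
  akern k r (enorm (toV x)) *
  \1_B ((r *: ((enorm (toV x))^-1 *: toV x)) : Rd R d).

Definition Aop {R : realType} {d : nat} (k : nat)
    (nu : {measure set (Rd R d) -> \bar R}) (B : set (Rd R d)) : \bar R :=
  (\int[nu]_(x in ([set~ (0%R : 'rV[R]_d)] : set (Rd R d)))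
     (\int[@lebesgue_measure R]_(r in [set r : R | (0 < r)%R])
        (Aintegrand k B x r)%:E))%E.

Definition levy2 {R : realType} {d : nat} (nu : {measure set (Rd R d) -> \bar R}) : Prop :=
  nu ([set (0%R : 'rV[R]_d)] : set (Rd R d)) = 0%E /\
  (\int[nu]_x (Order.min 1 (enorm (toV x) ^+ 2))%R%:E < +oo)%E.

Definition levy1 {R : realType} {d : nat} (nu : {measure set (Rd R d) -> \bar R}) : Prop :=
  levy2 nu /\ (\int[nu]_x (Order.min 1 (enorm (toV x)))%R%:E < +oo)%E.

(* The radial map x |-> |x|^(-1/2) x preserves directions and sends |x| to
   sqrt |x|; since a_2(r; sqrt s) = a_1(r; s), pushing nu forward along it turns
   A_1(nu) into A_2 of the image measure. Its inverse x |-> |x| x does the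
   converse. Both maps are homeomorphisms fixing 0, and they exchange the
   integrands min(1,|x|) and min(1,|x|^2) of the Levy conditions; the remaining
   condition min(1,|x|^4) <= min(1,|x|^2) is elementary. *)

From HB Require Import structures.
From mathcomp Require Import all_boot all_order all_algebra.
From mathcomp Require Import all_classical all_reals all_analysis.
Import Order.TTheory GRing.Theory Num.Theory.
Import numFieldNormedType.Exports.
Local Open Scope classical_set_scope.
Local Open Scope ring_scope.

Import HBNNSimple.

Section pullback_nnsfun.
Context d1 d2 (X : measurableType d1) (Y : measurableType d2) (R : realType).
Variables (f : {mfun X >-> Y}) (h : {nnsfun Y >-> R}).

Definition pullback : X -> R := h \o f.

Let pullback_ge0 x : 0 <= pullback x. Proof. by []. Qed.
HB.instance Definition _ := isNonNegFun.Build _ _ pullback pullback_ge0.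

Let measurable_pullback : measurable_fun setT pullback.
Proof. exact: measurableT_comp. Qed.
HB.instance Definition _ :=
  isMeasurableFun.Build _ _ _ _ pullback measurable_pullback.

Let finite_range_pullback : finite_set (range pullback).
Proof. by apply: sub_finite_set (fimfunP h) => _ [x _ <-]; exists (f x). Qed.
HB.instance Definition _ := FiniteImage.Build _ _ pullback finite_range_pullback.

End pullback_nnsfun.
Arguments pullback {d1 d2 X Y R}.

(* [pushforward mu f] is canonically a measure only given a proof that [f] is
   measurable, which cannot be inferred; bundling [f] as an [mfun] fixes that. *)
Definition image_measure d1 d2 (X : measurableType d1) (Y : measurableType d2)
    (R : realType) (mu : {measure set X -> \bar R}) (f : {mfun X >-> Y}) :=
  pushforward mu f.
Arguments image_measure {d1 d2 X Y R}.

Section image_measure_measure.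
Local Open Scope ereal_scope.
Context d1 d2 (X : measurableType d1) (Y : measurableType d2) (R : realType).
Variables (mu : {measure set X -> \bar R}) (f : {mfun X >-> Y}).

Let image_measure0 : image_measure mu f set0 = 0.
Proof. exact: measure0. Qed.

Let image_measure_ge0 A : 0 <= image_measure mu f A.
Proof. exact: measure_ge0. Qed.

Let image_measure_sigma_additive : semi_sigma_additive (image_measure mu f).
Proof. exact: measure_semi_sigma_additive. Qed.

HB.instance Definition _ := isMeasure.Build _ _ _ (image_measure mu f)
  image_measure0 image_measure_ge0 image_measure_sigma_additive.

End image_measure_measure.

Section ge0_integral_image_measure_bij.
Local Open Scope ereal_scope.
Context d1 d2 (X : measurableType d1) (Y : measurableType d2) (R : realType).
Variables (phi : {mfun X >-> Y}) (psi : {mfun Y >-> X}).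
Hypotheses (phiK : cancel phi psi) (psiK : cancel psi phi).
Variable mu : {measure set X -> \bar R}.

(* No measurability of [G] is needed: the simple functions below [G] on [Y]
   and below [G \o phi] on [X] correspond through [phi], and a simple
   integral against [image_measure mu phi] is by definition one against [mu]. *)
Lemma ge0_integral_image_measure_bij (D : set Y) (G : Y -> \bar R) :
  (forall y, D y -> 0 <= G y) ->
  \int[image_measure mu phi]_(y in D) G y = \int[mu]_(x in phi @^-1` D) G (phi x).
Proof.
move=> G0; rewrite !ge0_integralE//; last by move=> x /G0.
congr ereal_sup; apply/seteqP; split => _ [h hG <-].
  by exists (pullback phi h : {nnsfun X >-> R}) => // x; exact: hG.
exists (pullback psi h : {nnsfun Y >-> R}).
  move=> y; have := hG (psi y).
  by rewrite /patch -[psi y \in _]/(phi (psi y) \in D) psiK.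
transitivity (sintegral mu (pullback psi h \o phi)) => //.
by apply: eq_sintegral => x; rewrite /pullback /= phiK.
Qed.

End ge0_integral_image_measure_bij.
Arguments ge0_integral_image_measure_bij {d1 d2 X Y R phi psi}.

Lemma ge0_le_integral_nonmeasurable d (T : measurableType d) (R : realType)
    (mu : {measure set T -> \bar R}) (D : set T) (f g : T -> \bar R) :
  (forall x, D x -> (0 <= f x)%E) -> (forall x, D x -> (f x <= g x)%E) ->
  (\int[mu]_(x in D) f x <= \int[mu]_(x in D) g x)%E.
Proof.
move=> f0 fg; rewrite !ge0_integralE// => [|x Dx]; last first.
  exact: le_trans (f0 x Dx) (fg x Dx).
apply: ereal_sup_le => _ [h hf <-]; exists h => // x; apply: le_trans (hf x) _.
by rewrite /patch; case: ifP => // /[!in_setE] /fg.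
Qed.

Lemma continuous_measurable_fun_open {T U : ptopologicalType} {f : T -> U} :
  continuous f ->
  measurable_fun (setT : set (g_sigma_algebraType (@open T)))
    (f : g_sigma_algebraType (@open T) -> g_sigma_algebraType (@open U)).
Proof.
move=> cf; apply: (@measurability _ _ (g_sigma_algebraType (@open T))
  (g_sigma_algebraType (@open U)) setT f (@open U)) => // _ [A oA <-].
by apply: sub_sigma_algebra; rewrite setTI; exact: (continuousP f).1.
Qed.

Lemma preimage_set1_fixed {T : Type} {f : T -> T} {a : T} :
  injective f -> f a = a -> f @^-1` [set a] = [set a].
Proof.
move=> injf fa; apply/seteqP; split => [x /= fxa|x -> //=].
by apply: injf; rewrite fxa.
Qed.

Lemma min1_sqr_le (R : realType) (a : R) :
  0 <= a -> Order.min 1 (a ^+ 2) <= Order.min 1 a.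
Proof.
move=> a0; rewrite le_min !ge_min lexx /=; have [a1|/ltW a1] := leP a 1.
  by rewrite expr2 ler_piMl ?orbT.
by rewrite a1.
Qed.

Lemma invr_mul_sqr (F : fieldType) (a : F) : a^-1 * a ^+ 2 = a.
Proof. by have [->|a0] := eqVneq a 0; rewrite ?invr0 ?mul0r// expr2 mulKf. Qed.

Section euclidean_norm.
Context {R : realType} {d : nat}.
Implicit Types x : 'rV[R]_d.

Lemma enorm_ge0 x : 0 <= enorm x.
Proof. exact: sqrtr_ge0. Qed.

Lemma enormZ (c : R) x : enorm (c *: x) = `|c| * enorm x.
Proof.
rewrite /enorm -sqrtr_sqr -sqrtrM ?sqr_ge0// mulr_sumr.
by congr Num.sqrt; apply: eq_bigr => i _; rewrite mxE exprMn.
Qed.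

Lemma enorm0 : enorm (0 : 'rV[R]_d) = 0.
Proof. by rewrite /enorm big1 ?sqrtr0// => i _; rewrite mxE expr0n. Qed.

Lemma enorm0_eq0 x : enorm x = 0 -> x = 0.
Proof.
move=> /eqP; rewrite sqrtr_eq0 => sum_le0.
have /psumr_eq0P sq0 : \sum_(i < d) x ord0 i ^+ 2 = 0.
  by apply/le_anti; rewrite sum_le0 sumr_ge0// => i _; exact: sqr_ge0.
apply/rowP => i; apply/eqP; rewrite mxE -sqrf_eq0.
by apply/eqP/sq0 => // j _; exact: sqr_ge0.
Qed.

Lemma sqrt_enorm_eq0 x : (Num.sqrt (enorm x) == 0) = (enorm x == 0).
Proof. by rewrite sqrtr_eq0 eq_le enorm_ge0 andbT. Qed.

Lemma normr_le_enorm x : `|x| <= enorm x.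
Proof.
rewrite [leLHS]mx_normrE; apply: bigmax_le => [|[i j] _]; first exact: enorm_ge0.
rewrite /= (ord1 i) -sqrtr_sqr; apply: ler_wsqrtr.
by rewrite (bigD1 j)//= lerDl sumr_ge0// => k _; exact: sqr_ge0.
Qed.

Lemma continuous_enorm : continuous (@enorm R d).
Proof.
have csum : continuous (fun y : 'rV[R]_d => \sum_(i < d) y ord0 i ^+ 2).
  apply: continuous_big => [|i _ y]; first exact: add_continuous.
  apply: (continuous_comp (f := fun M : 'rV[R]_d => M ord0 i)
    (g := (@GRing.exp R)^~ 2)).
    exact: coord_continuous.
  exact: exprn_continuous.
move=> x; apply: (continuous_comp
  (f := fun y : 'rV[R]_d => \sum_(i < d) y ord0 i ^+ 2)).
  exact: csum.
exact: sqrt_continuous.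
Qed.

End euclidean_norm.

Section radial_maps.
Context {R : realType} {d : nat}.
Implicit Types x : 'rV[R]_d.

Definition radial_sqrt x : 'rV[R]_d := (Num.sqrt (enorm x))^-1 *: x.
Definition radial_sqr x : 'rV[R]_d := enorm x *: x.

Lemma enorm_radial_sqrt x : enorm (radial_sqrt x) = Num.sqrt (enorm x).
Proof.
rewrite enormZ ger0_norm ?invr_ge0 ?sqrtr_ge0//.
by rewrite -{2}(sqr_sqrtr (enorm_ge0 x)) invr_mul_sqr.
Qed.

Lemma enorm_radial_sqr x : enorm (radial_sqr x) = enorm x ^+ 2.
Proof. by rewrite enormZ ger0_norm ?enorm_ge0// expr2. Qed.

Lemma radial_sqrtK : cancel radial_sqrt radial_sqr.
Proof.
move=> x; rewrite /radial_sqr enorm_radial_sqrt /radial_sqrt scalerA.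
have [/enorm0_eq0->|x0] := eqVneq (enorm x) 0; first by rewrite scaler0.
by rewrite mulfV ?scale1r ?sqrt_enorm_eq0.
Qed.

Lemma radial_sqrK : cancel radial_sqr radial_sqrt.
Proof.
move=> x; rewrite /radial_sqrt enorm_radial_sqr sqrtr_sqr ger0_norm ?enorm_ge0//.
rewrite /radial_sqr scalerA.
have [/enorm0_eq0->|x0] := eqVneq (enorm x) 0; first by rewrite scaler0.
by rewrite mulVf ?scale1r.
Qed.

Lemma radial_sqrt0 : radial_sqrt 0 = 0.
Proof. by rewrite /radial_sqrt scaler0. Qed.

Lemma radial_sqr0 : radial_sqr 0 = 0.
Proof. by rewrite /radial_sqr scaler0. Qed.

Lemma continuous_radial_sqr : continuous radial_sqr.
Proof. by move=> x; apply: cvgZ (continuous_enorm x) cvg_id. Qed.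

Lemma continuous_radial_sqrt : continuous radial_sqrt.
Proof.
have csqrt : continuous (fun x : 'rV[R]_d => Num.sqrt (enorm x)).
  by move=> x; apply: (continuous_comp (f := @enorm R d));
    [exact: continuous_enorm | exact: sqrt_continuous].
move=> x; have [/enorm0_eq0->|x0] := eqVneq (enorm x) 0.
  rewrite /continuous_at radial_sqrt0; apply/norm_cvg0P; first exact: nbhs_filter.
  apply: (@squeeze_cvgr _ _ (nbhs_filter (0 : 'rV[R]_d)) _ (fun=> 0)
    (fun y => Num.sqrt (enorm y))).
  - by apply: nearW => y; rewrite normr_ge0 -enorm_radial_sqrt normr_le_enorm.
  - exact: cvg_cst.
  - by have := csqrt 0; rewrite /continuous_at enorm0 sqrtr0.
have sx : Num.sqrt (enorm x) != 0 by rewrite sqrt_enorm_eq0.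
exact: cvgZ (cvgV sx (csqrt x)) cvg_id.
Qed.

End radial_maps.

Section radial_mfun.
Context {R : realType} {d : nat}.

Lemma measurable_radial_sqrt :
  measurable_fun (setT : set (Rd R d)) (radial_sqrt : Rd R d -> Rd R d).
Proof. exact: continuous_measurable_fun_open continuous_radial_sqrt. Qed.
Definition radial_sqrt_mfun : {mfun Rd R d >-> Rd R d} :=
  HB.pack (radial_sqrt : Rd R d -> Rd R d)
    (isMeasurableFun.Build _ _ _ _ _ measurable_radial_sqrt).

Lemma measurable_radial_sqr :
  measurable_fun (setT : set (Rd R d)) (radial_sqr : Rd R d -> Rd R d).
Proof. exact: continuous_measurable_fun_open continuous_radial_sqr. Qed.
Definition radial_sqr_mfun : {mfun Rd R d >-> Rd R d} :=
  HB.pack (radial_sqr : Rd R d -> Rd R d)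
    (isMeasurableFun.Build _ _ _ _ _ measurable_radial_sqr).

End radial_mfun.

Section Aintegrand.
Context {R : realType} {d : nat}.
Implicit Types (B : set (Rd R d)) (x : Rd R d).

Lemma akern_ge0 k (r s : R) : 0 <= akern k r s.
Proof.
rewrite /akern /a1 /a2; case: ifP => _; case: ifP => _ //;
  by rewrite mulr_ge0 ?divr_ge0 ?invr_ge0 ?sqrtr_ge0 ?pi_ge0.
Qed.

Lemma Aintegrand_ge0 (k : nat) B x (r : R) : 0 <= Aintegrand k B x r.
Proof. by rewrite /Aintegrand mulr_ge0 ?akern_ge0. Qed.

Lemma integral_Aintegrand_ge0 (k : nat) B x :
  (0 <= \int[lebesgue_measure]_(r in [set r : R | (0 < r)%R])
          (Aintegrand k B x r)%:E)%E.
Proof. by apply: integral_ge0 => r _; rewrite lee_fin Aintegrand_ge0. Qed.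

Lemma Aintegrand2_radial_sqrt B x :
  Aintegrand 2 B (radial_sqrt x) = Aintegrand 1 B x.
Proof.
apply/funext => r; rewrite /Aintegrand /akern /toV /= enorm_radial_sqrt /a1 /a2.
rewrite sqr_sqrtr ?enorm_ge0//; congr (_ * \1_B (r *: _)).
by rewrite /radial_sqrt scalerA -invfM -expr2 sqr_sqrtr ?enorm_ge0.
Qed.

End Aintegrand.

Section radial_transfer.
Context {R : realType} {d : nat}.
Implicit Types B : set (Rd R d).
Let T := @radial_sqrt_mfun R d.
Let S := @radial_sqr_mfun R d.
Let TK : cancel T S := radial_sqrtK.
Let SK : cancel S T := radial_sqrK.
Let transfer_sqrt := ge0_integral_image_measure_bij (R := R) TK SK.
Let transfer_sqr := ge0_integral_image_measure_bij (R := R) SK TK.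
Let T0 : T @^-1` [set 0] = [set 0] :=
  preimage_set1_fixed (can_inj TK) radial_sqrt0.
Let S0 : S @^-1` [set 0] = [set 0] :=
  preimage_set1_fixed (can_inj SK) radial_sqr0.

Lemma Aop2_image_radial_sqrt (nu : {measure set (Rd R d) -> \bar R}) B :
  Aop 2 (image_measure nu T) B = Aop 1 nu B.
Proof.
rewrite /Aop transfer_sqrt => [|y _]; last exact: integral_Aintegrand_ge0.
rewrite -preimage_setC T0.
by apply: eq_integral => x _; rewrite (Aintegrand2_radial_sqrt B x).
Qed.

Lemma Aop1_image_radial_sqr (mu : {measure set (Rd R d) -> \bar R}) B :
  Aop 1 (image_measure mu S) B = Aop 2 mu B.
Proof.
rewrite /Aop transfer_sqr => [|y _]; last exact: integral_Aintegrand_ge0.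
rewrite -preimage_setC S0; apply: eq_integral => x _.
by rewrite -(Aintegrand2_radial_sqrt B (S x)) (radial_sqrK x).
Qed.

Lemma levy2_image_radial_sqrt (nu : {measure set (Rd R d) -> \bar R}) :
  levy1 nu -> levy2 (image_measure nu T).
Proof.
move=> [[nu0 _] nu1]; split; first by rewrite /= /image_measure /pushforward T0.
rewrite transfer_sqrt ?preimage_setT => [|y _]; last first.
  by rewrite lee_fin le_min ler01 sqr_ge0.
under eq_integral => x _ do
  rewrite (enorm_radial_sqrt x) (sqr_sqrtr (enorm_ge0 x)).
exact: nu1.
Qed.

Lemma levy1_image_radial_sqr (mu : {measure set (Rd R d) -> \bar R}) :
  levy2 mu -> levy1 (image_measure mu S).
Proof.
move=> [mu0 mu2]; split; first split.
- by rewrite /= /image_measure /pushforward S0.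
- rewrite transfer_sqr ?preimage_setT => [|y _]; last first.
    by rewrite lee_fin le_min ler01 sqr_ge0.
  apply: le_lt_trans mu2; apply: ge0_le_integral_nonmeasurable => x _.
    by rewrite lee_fin le_min ler01 sqr_ge0.
  by rewrite lee_fin (enorm_radial_sqr x) min1_sqr_le ?sqr_ge0.
- rewrite transfer_sqr ?preimage_setT => [|y _]; last first.
    by rewrite lee_fin le_min ler01 enorm_ge0.
  by under eq_integral => x _ do rewrite (enorm_radial_sqr x).
Qed.

End radial_transfer.

Theorem proposition2p10 (R : realType) (d : nat) :
  (forall nu : {measure set (Rd R d) -> \bar R}, levy1 nu ->
     exists mu : {measure set (Rd R d) -> \bar R}, levy2 mu /\
       forall B : set (Rd R d), measurable B -> Aop 1 nu B = Aop 2 mu B) /\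
  (forall mu : {measure set (Rd R d) -> \bar R}, levy2 mu ->
     exists nu : {measure set (Rd R d) -> \bar R}, levy1 nu /\
       forall B : set (Rd R d), measurable B -> Aop 2 mu B = Aop 1 nu B).
Proof.
split=> [nu nu1|mu mu2].
  exists (image_measure nu radial_sqrt_mfun).
  split; first exact: levy2_image_radial_sqrt.
  by move=> B _; rewrite Aop2_image_radial_sqrt.
exists (image_measure mu radial_sqr_mfun).
split; first exact: levy1_image_radial_sqr.
by move=> B _; rewrite Aop1_image_radial_sqr.
Qed.
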